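(* Let $w$ be a perfectly clustering Lyndon word over a totally ordered alphabet, with a palindromic special factorization $w=a_1\pi_1a_2\pi_2\cdots\pi_{k-1}a_k$. Let $s\in\{1,\dots,k-1\}$. If $\pi_s$ is the empty word, then $c_1+\cdots+c_s=c_{s+1}+\cdots+c_k$, where $c_h=|w|_{a_h}$.
   Context: $|w|_a$ denotes the number of occurrences of the letter $a$ in $w$. A special factorization of $w$ is a factorization $w=a_1\pi_1a_2\cdots\pi_{k-1}a_k$ where the set of letters occurring in $w$ is $\{a_1<\cdots<a_k\}$ and $\pi_1,\dots,\pi_{k-1}$ are words; it is palindromic if every $\pi_i$ is a palindrome. Lexicographic order: a proper prefix is smaller. A Lyndon word is a primitive word strictly smaller than its other conjugates. For a primitive word $v$ of length $n$ with conjugates $v_1<\cdots<v_n$, $\mathrm{bw}(v)$ is the word formed by the last letters of $v_1,\dots,v_n$; $v$ is perfectly clustering if $\mathrm{bw}(v)$ is weakly decreasing. *)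

From mathcomp Require Import all_boot all_order.
Set Implicit Arguments. Unset Strict Implicit. Unset Printing Implicit Defensive.
Import Order.TTheory.
Local Open Scope order_scope.

Section Words.
Variables (d : Order.disp_t) (T : orderType d).

Fixpoint lexlt (u v : seq T) : bool :=
  match u, v with
  | [::], [::] => false
  | [::], _ :: _ => true
  | _ :: _, [::] => false
  | x :: u', y :: v' => (x < y) || ((x == y) && lexlt u' v')
  end.

Definition lexle (u v : seq T) : bool := (u == v) || lexlt u v.

Definition primitive (v : seq T) : Prop :=
  ~ exists (u : seq T) (n : nat), (1 < n)%N /\ v = flatten (nseq n u).

Definition conjugates (v : seq T) : seq (seq T) :=
  [seq rot i v | i <- iota 0 (size v)].

Definition lyndon (v : seq T) : Prop :=
  primitive v /\ forall u, u \in conjugates v -> u != v -> lexlt v u.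

Definition bw (v : seq T) : seq T :=
  match v with
  | [::] => [::]
  | x :: _ => [seq last x u | u <- sort lexle (conjugates v)]
  end.

Definition perfectly_clustering (v : seq T) : Prop :=
  primitive v /\ sorted (fun x y : T => y <= x) (bw v).

(* the word a_1 pi_1 a_2 ... pi_{k-1} a_k, for a = [a_1;...;a_k], pis = [pi_1;...;pi_{k-1}] *)
Definition interleave (a : seq T) (pis : seq (seq T)) : seq T :=
  match a with
  | [::] => [::]
  | a1 :: rest => a1 :: flatten [seq p.1 ++ [:: p.2] | p <- zip pis rest]
  end.

Definition special_factorization (w a : seq T) (pis : seq (seq T)) : Prop :=
  [/\ sorted (fun x y : T => x < y) a,
      (forall x, (x \in a) = (x \in w)),
      size pis = (size a).-1 &
      w = interleave a pis].

Definition palindromic_factorization (w a : seq T) (pis : seq (seq T)) : Prop :=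
  special_factorization w a pis /\ all (fun p => p == rev p) pis.

End Words.

From mathcomp Require Import all_boot all_order zify.
Set Implicit Arguments. Unset Strict Implicit. Unset Printing Implicit Defensive.
Import Order.TTheory Order.DefaultSeqLexiOrder.

(* Let n = |w| and let r(t) be the number of conjugates of w smaller than the
   rotation of w by t. As w is Lyndon, r is a bijection onto {0, ..., n-1} with
   r(0) = 0, so 2 (r(1) + ... + r(n-1)) = n (n-1). Perfect clustering makes a
   conjugate starting with a letter z <> w_t compare with the rotation by t+1 as
   z compares with w_t, whence r(t+1) + #{letters < w_t} = r(t) + #{letters > w_t}.
   Along a block a_h pi_h a_(h+1) the increments are read on the palindrome pi_h in
   both directions, so r takes symmetric values at symmetric positions, and since
   #{letters > a_h} + #{letters < a_(h+1)} >= n every block contributes at least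
   n/2 per position. The total forces equality everywhere: if pi_s is empty, the
   position of a_(s+1) has rank n/2, and exactly half of the letters of w are
   smaller than a_(s+1). *)


Section Powers.
Variable T : Type.
Implicit Types u v w : seq T.

Lemma cat_commute_powers u v : u ++ v = v ++ u ->
  exists z m n, u = flatten (nseq m z) /\ v = flatten (nseq n z).
Proof.
have [k] := ubnP (size u + size v); elim: k u v => // k IH u v lt_uv_k.
wlog le_uv : u v lt_uv_k / size u <= size v.
  move=> hwlog; case: (leqP (size u) (size v)) => [|/ltnW]; first exact: hwlog.
  move=> le_vu /esym/hwlog; rewrite addnC => /(_ lt_uv_k le_vu).
  by case=> z [m [n [-> ->]]]; exists z, n, m.
case: u => [|x u] in lt_uv_k le_uv *; first by exists v, 0, 1; rewrite /= cats0.
set u1 := x :: u => uvC.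
have def_v : v = u1 ++ drop (size u1) v.
  have := congr1 (take (size u1)) uvC.
  by rewrite take_size_cat // takel_cat // => {1}->; rewrite cat_take_drop.
set v1 := drop _ v in def_v.
have uv1C : u1 ++ v1 = v1 ++ u1.
  by move: uvC; rewrite def_v -catA => /(congr1 (drop (size u1))); rewrite !drop_size_cat.
have lt_uv1_k : size u1 + size v1 < k.
  by move: lt_uv_k; rewrite [in size v]def_v size_cat /=; lia.
have [z [m [n [def_u1 def_v1]]]] := IH _ _ lt_uv1_k uv1C.
by exists z, m, (m + n); rewrite def_v nseqD flatten_cat -def_u1 -def_v1.
Qed.

Lemma rot_fixed_power w k : 0 < k < size w -> rot k w = w ->
  exists z m, 1 < m /\ w = flatten (nseq m z).
Proof.
case/andP=> k_gt0 lt_k_w rot_w.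
have : take k w ++ drop k w = drop k w ++ take k w by rewrite cat_take_drop -{1}rot_w.
case/cat_commute_powers=> z [m [n [def_take def_drop]]].
exists z, (m + n); rewrite nseqD flatten_cat -def_take -def_drop cat_take_drop.
split=> //.
have m_gt0 : 0 < m.
  case: m def_take => // /(congr1 size).
  by rewrite size_takel ?(ltnW lt_k_w) // => k0; rewrite k0 in k_gt0.
have n_gt0 : 0 < n.
  case: n def_drop => // /(congr1 size).
  by rewrite size_drop => /eqP; rewrite subn_eq0 leqNgt lt_k_w.
by rewrite -(addn1 1) leq_add.
Qed.

End Powers.

Lemma sum_count_lt_uniq d (S : orderType d) (l : seq S) : uniq l ->
  2 * \sum_(u <- l) count (fun v => (v < u)%O) l = size l * (size l).-1.
Proof.
move=> l_uniq; have count_sum (P : pred S) : count P l = \sum_(v <- l) P v.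
  by rewrite -sum1_count big_mkcond.
under eq_bigr do rewrite count_sum.
rewrite mul2n -addnn {2}exchange_big -big_split /=.
transitivity (\sum_(u <- l) (size l).-1).
  apply: eq_big_seq => u u_l; rewrite -big_split /=.
  have neq_sum : \sum_(v <- l) ((v < u)%O + (u < v)%O) = \sum_(v <- l) (v != u).
    by apply: eq_bigr => v _; case: ltgtP.
  rewrite neq_sum -count_sum -(count_predC (pred1 u) l) count_uniq_mem // u_l.
  by rewrite add1n.
by rewrite big_const_seq count_predT iter_addn_0 mulnC.
Qed.

Lemma count_predU_disjoint (T : Type) (a1 a2 : pred T) (s : seq T) :
  (forall x, a1 x -> a2 x -> False) ->
  count (predU a1 a2) s = count a1 s + count a2 s.
Proof.
move=> a12_disj; rewrite -count_predUI (@eq_count _ (predI _ _) pred0) ?count_pred0 ?addn0 //.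
by move=> x /=; apply/negbTE/andP=> -[/a12_disj].
Qed.

Lemma sum_count_mem_uniq (T : eqType) (l s : seq T) : uniq l ->
  \sum_(x <- l) count_mem x s = count (mem l) s.
Proof.
elim: l => [|x l IHl] /=; first by rewrite big_nil count_pred0.
case/andP=> x_notin_l l_uniq; rewrite big_cons IHl // -count_predU_disjoint.
  by apply: eq_count => z; rewrite /= inE.
by move=> z /eqP-> /(negP x_notin_l).
Qed.

Lemma palindrome_steps_sum (T : Type) (x0 : T) (pi : seq T) (g : nat -> nat) (c e : T -> nat) :
  pi = rev pi ->
  (forall i, i < size pi -> g i.+1 + c (nth x0 pi i) = g i + e (nth x0 pi i)) ->
  2 * \sum_(0 <= i < (size pi).+1) g i = (size pi).+1 * (g 0 + g (size pi)).
Proof.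
move=> pi_pal g_step; set m := size pi.
have g_sym i : i <= m -> g i + g (m - i) = g 0 + g m.
  elim: i => [|i IHi] lt_i_m; first by rewrite subn0.
  rewrite -(IHi (ltnW lt_i_m)).
  have mirror : nth x0 pi (m - i.+1) = nth x0 pi i by rewrite [in RHS]pi_pal nth_rev.
  have := g_step i lt_i_m; have := g_step (m - i.+1) ltac:(lia).
  by rewrite mirror -subSn //= subSS; lia.
rewrite mul2n -addnn {2}big_nat_rev -big_split /= -[m.+1 in RHS]subn0 -sum_nat_const_nat.
by apply: eq_big_nat => i /andP[_ lt_i_m]; rewrite add0n subSS g_sym.
Qed.


Section Words.
Variables (d : Order.disp_t) (T : orderType d).
Implicit Types (x y : T) (u v w b q : seq T) (qs : seq (seq T)).

Lemma lexltE u v : lexlt u v = (u < v)%O.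
Proof.
elim: u v => [|x u IHu] [|y v] //=.
by rewrite ltxi_cons IHu; case: (ltgtP x y).
Qed.

Lemma lexleE u v : lexle u v = (u <= v)%O.
Proof. by rewrite /lexle lexltE le_eqVlt. Qed.

Lemma ltxi_rcons2 u v x : size u = size v -> (rcons u x < rcons v x)%O = (u < v)%O.
Proof.
elim: u v => [|y u IHu] [|z v] //= [size_uv].
by rewrite !ltxi_cons IHu.
Qed.

Lemma size_conjugate w v : v \in conjugates w -> size v = size w.
Proof. by case/mapP=> i _ ->; rewrite size_rot. Qed.

Lemma rot_in_conjugates w t : t < size w -> rot t w \in conjugates w.
Proof. by move=> lt_t_w; apply: map_f; rewrite mem_iota. Qed.

Lemma uniq_conjugates w : primitive w -> uniq (conjugates w).
Proof.
move=> w_prim; rewrite map_inj_in_uniq ?iota_uniq // => i j.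
rewrite !mem_iota !add0n /= => lt_i_w lt_j_w.
wlog lt_ij : i j lt_i_w lt_j_w / i < j.
  move=> hwlog; case: (ltngtP i j) => // [lt_ij | lt_ji] rot_ij; first exact: hwlog.
  exact/esym/hwlog.
move=> rot_ij; case: w_prim; apply: (@rot_fixed_power _ w (j - i)); first lia.
apply: (@rot_inj i); rewrite rot_rot -rotD ?subnK ?(ltnW lt_ij) ?(ltnW lt_j_w) //.
Qed.

Lemma map_rot1_conjugates w : map (rot 1) (conjugates w) = rot 1 (conjugates w).
Proof.
case: w => [|x w] //; set xw := x :: w.
transitivity (map (rot^~ xw) (iota 1 (size w).+1)).
  rewrite (iotaDl 1 0) -!map_comp; apply/eq_in_map => i.
  by rewrite mem_iota /= add1n => lt_i_w; rewrite -rotS.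
rewrite -[(size w).+1]addn1 iotaD map_cat /= add1n -[(size w).+1]/(size xw) rot_size.
by rewrite /conjugates /= rot1_cons rot0 cats1.
Qed.

Lemma rot1_in_conjugates w v : v \in conjugates w -> rot 1 v \in conjugates w.
Proof. by move=> v_w; rewrite -(mem_rot 1) -map_rot1_conjugates map_f. Qed.

Lemma count_conjugates_rot1 w (P : pred (seq T)) :
  count (fun v => P (rot 1 v)) (conjugates w) = count P (conjugates w).
Proof. by rewrite -count_map map_rot1_conjugates; apply/permP; rewrite perm_rot. Qed.

Variable x0 : T.

Lemma rot_nth_behead w t : t < size w -> rot t w = nth x0 w t :: behead (rot t w).
Proof.
move=> lt_t_w; rewrite /rot -[t in nth _ _ t]addn0 -nth_drop.
case: (drop t w) (size_drop t w) => [/eqP|//]; rewrite eq_sym subn_eq0.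
by rewrite leqNgt lt_t_w.
Qed.

Lemma count_conjugates_head w (P : pred T) :
  count (fun v => P (head x0 v)) (conjugates w) = count P w.
Proof.
rewrite -[in RHS](mkseq_nth x0 w) count_map /mkseq count_map.
apply: eq_in_count => t; rewrite mem_iota /= => lt_t_w.
by rewrite (rot_nth_behead lt_t_w).
Qed.

Lemma bw_map_last w : bw w = [seq last x0 u | u <- sort (@lexle _ T) (conjugates w)].
Proof.
case: w => [|x w] //=; apply/eq_in_map => u.
by rewrite mem_sort => /size_conjugate; case: u.
Qed.

Lemma interleave_cons2 x y b q qs :
  interleave (x :: y :: b) (q :: qs) = x :: q ++ interleave (y :: b) qs.
Proof. by rewrite /= -catA. Qed.

Lemma interleave_cat_nil b1 b2 qs1 qs2 : size qs1 = (size b1).-1 -> b1 != [::] ->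
  interleave (b1 ++ b2) (qs1 ++ [::] :: qs2) = interleave b1 qs1 ++ interleave b2 qs2.
Proof.
elim: qs1 b1 => [|q qs1 IHqs] [|x [|y b1]] //; first by case: b2.
move=> [size_qs] _; rewrite (interleave_cons2 x y (b1 ++ b2)) interleave_cons2.
by rewrite (IHqs (y :: b1)) // catA.
Qed.

Lemma last_interleave b qs : size qs = (size b).-1 ->
  last x0 (interleave b qs) = last x0 b.
Proof.
elim: qs b => [|q qs IHqs] [|x [|y b]] // [/(IHqs (y :: b))].
rewrite interleave_cons2; have [tl ->] : exists tl, interleave (y :: b) qs = y :: tl.
  by eexists.
by rewrite !last_cons last_cat last_cons => ->.
Qed.

End Words.

Section Rank.
Variables (d : Order.disp_t) (T : orderType d) (w : seq T).
Implicit Types (x y : T) (u v : seq T).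

Definition below x := count (fun z => (z < x)%O) w.
Definition above x := count (fun z => (x < z)%O) w.
Definition rank t := count (fun v => (v < rot t w)%O) (conjugates w).

Lemma size_le_above_below x y : (x < y)%O -> size w <= above x + below y.
Proof.
move=> lt_xy; rewrite /above /below -count_predUI -[size w]count_predT.
apply: leq_trans (leq_addr _ _); apply: sub_count => z _ /=.
by case: (leP z x) => // le_zx; rewrite (le_lt_trans le_zx lt_xy) orbT.
Qed.

Lemma rank_lyndon0 : lyndon w -> rank 0 = 0.
Proof.
case=> _ w_min; rewrite /rank rot0; apply/eqP; rewrite -leqn0 leqNgt -has_count.
apply/hasPn => v v_w /=; case: (eqVneq v w) => [-> | neq_vw]; first by rewrite ltxx.
by rewrite lt_gtF // -lexltE w_min.
Qed.

Lemma sum_rank : primitive w -> 2 * \sum_(0 <= t < size w) rank t = size w * (size w).-1.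
Proof.
move=> w_prim.
have -> : \sum_(0 <= t < size w) rank t =
          \sum_(u <- conjugates w) count (fun v => (v < u)%O) (conjugates w).
  by rewrite big_map /index_iota subn0.
by rewrite sum_count_lt_uniq ?uniq_conjugates // size_map size_iota.
Qed.

Variable x0 : T.

Definition rank_same_head t :=
  count (fun v => (head x0 v == nth x0 w t) && (behead v < behead (rot t w))%O) (conjugates w).

Lemma rank_below t : t < size w -> rank t = below (nth x0 w t) + rank_same_head t.
Proof.
move=> lt_t_w; rewrite /below -(count_conjugates_head x0) -count_predU_disjoint; last first.
  by move=> v /= /lt_eqF ->.
apply: eq_in_count => v /size_conjugate; rewrite (rot_nth_behead x0 lt_t_w).
case: v => [size_v | h v _] /=; first by rewrite -size_v in lt_t_w.
by rewrite ltxi_cons; case: (ltgtP h).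
Qed.

Lemma below_le_rank t : t < size w -> below (nth x0 w t) <= rank t.
Proof. by move=> lt_t_w; rewrite rank_below // leq_addr. Qed.

Lemma sum_count_take_sorted a s : sorted <%O a -> {subset w <= a} -> s < size a ->
  \sum_(z <- take s a) count_mem z w = below (nth x0 a s).
Proof.
move=> a_sorted w_a lt_s_a; rewrite sum_count_mem_uniq ?take_uniq ?lt_sorted_uniq //.
apply: eq_in_count => z /w_a z_a /=.
by rewrite in_take // -{2}(nth_index x0 z_a) (lt_sorted_ltn_nth x0 a_sorted) ?inE ?index_mem.
Qed.

Hypothesis w_pc : perfectly_clustering w.

Lemma perfectly_clustering_lt_last u v : u \in conjugates w -> v \in conjugates w ->
  (last x0 u < last x0 v)%O -> (v < u)%O.
Proof.
case: w_pc => _; rewrite (bw_map_last x0); set S := sort _ _ => bw_sorted u_w v_w lt_last.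
have S_sorted : sorted <=%O S.
  by rewrite -(eq_sorted (@lexleE _ T)) sort_sorted // => u' v'; rewrite !lexleE le_total.
have [u_S v_S] : u \in S /\ v \in S by rewrite !mem_sort.
case: ltgtP => // [lt_uv | eq_vu]; last by rewrite eq_vu ltxx in lt_last.
have lt_index : index u S < index v S.
  rewrite ltnNge; apply/negP => /(sorted_leq_index le_trans le_refl S_sorted _ _ v_S u_S).
  by rewrite leNgt lt_uv.
have := sorted_ltn_nth (rev_trans le_trans) x0 bw_sorted (index u S) (index v S).
rewrite !inE size_map !index_mem => /(_ u_S v_S lt_index).
by rewrite !(nth_map u) ?index_mem // !nth_index // leNgt lt_last.
Qed.

Lemma rank_succ_above t : t.+1 < size w -> rank t.+1 = above (nth x0 w t) + rank_same_head t.
Proof.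
move=> lt_t1_w; have lt_t_w := ltnW lt_t1_w.
set x := nth x0 w t; set b := behead (rot t w).
have rot_t1 : rot t.+1 w = rcons b x by rewrite rotS // {1}(rot_nth_behead x0 lt_t_w) rot1_cons.
have b_w : rcons b x \in conjugates w by rewrite -rot_t1 rot_in_conjugates.
rewrite /rank -count_conjugates_rot1 /above -(count_conjugates_head x0).
rewrite -count_predU_disjoint => [|v /= /gt_eqF]; last by rewrite eq_sym => ->.
apply: eq_in_count => v v_w; have := rot1_in_conjugates v_w; move: (size_conjugate v_w).
case: v {v_w} => [size_v | h v size_v] /=; first by rewrite -size_v in lt_t_w.
rewrite rot1_cons rot_t1 => v_w.
case: (ltgtP x h) => [lt_xh | lt_hx | <-] /=.
- by apply: perfectly_clustering_lt_last; rewrite ?last_rcons.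
- by apply/negbTE; rewrite -leNgt ltW // perfectly_clustering_lt_last ?last_rcons.
- by rewrite ltxi_rcons2 // /b size_behead size_rot -size_v.
Qed.

Lemma above_le_rank_succ t : t.+1 < size w -> above (nth x0 w t) <= rank t.+1.
Proof. by move=> lt_t1_w; rewrite rank_succ_above // leq_addr. Qed.

Lemma rank_step t : t.+1 < size w ->
  rank t.+1 + below (nth x0 w t) = rank t + above (nth x0 w t).
Proof.
by move=> lt_t1_w; rewrite rank_succ_above // rank_below ?(ltnW lt_t1_w) //; lia.
Qed.

Lemma block_rank_sum p x pi y rest :
  drop p w = x :: pi ++ y :: rest -> (x < y)%O -> pi = rev pi ->
  size w * (size pi).+1 <= 2 * \sum_(p.+1 <= t < p.+1 + (size pi).+1) rank t.
Proof.
move=> def_drop lt_xy pi_pal; set m := size pi.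
have nth_w i : nth x0 w (p + i) = nth x0 (x :: pi ++ y :: rest) i by rewrite -nth_drop def_drop.
have lt_m_w : p + m.+1 < size w.
  by have := congr1 size def_drop; rewrite size_drop /= size_cat /=; lia.
rewrite -{1}[p.+1]add0n big_addn addKn.
rewrite (palindrome_steps_sum (g := fun i => rank (i + p.+1)) (c := below) (e := above)
  (x0 := x0) pi_pal).
  have above_x : above x <= rank p.+1.
    by rewrite -[x]/(nth x0 (x :: pi ++ y :: rest) 0) -nth_w addn0 above_le_rank_succ //; lia.
  have below_y : below y <= rank (m + p.+1).
    have -> : y = nth x0 w (m + p.+1) by rewrite addnC addSnnS nth_w /= nth_cat ltnn subnn.
    by rewrite below_le_rank //; lia.
  by rewrite mulnC leq_mul2l (leq_trans (size_le_above_below lt_xy)) ?leq_add ?orbT.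
move=> i lt_i_m; have -> : nth x0 pi i = nth x0 w (i + p.+1).
  by rewrite addnC addSnnS nth_w /= nth_cat lt_i_m.
by have := rank_step (t := i + p.+1) ltac:(lia); rewrite !addnS.
Qed.

Lemma interleave_rank_sum b qs p rest :
  drop p w = interleave b qs ++ rest -> sorted <%O b -> all (fun q => q == rev q) qs ->
  size qs = (size b).-1 ->
  size w * (size (interleave b qs)).-1 <=
    2 * \sum_(p.+1 <= t < p.+1 + (size (interleave b qs)).-1) rank t.
Proof.
elim: qs b p => [|q qs IHqs] [|x [|y b]] p //.
1,2: by rewrite /= muln0.
rewrite interleave_cons2 => def_drop /andP[lt_xy yb_sorted] /andP[/eqP q_pal qs_pal] [size_qs].
have drop_rest : drop (p + (size q).+1) w = interleave (y :: b) qs ++ rest.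
  by rewrite addnC -drop_drop def_drop /= -catA drop_size_cat.
have IH := IHqs (y :: b) _ drop_rest yb_sorted qs_pal size_qs.
have [tl def_I] : exists tl, interleave (y :: b) qs = y :: tl by eexists.
rewrite def_I in def_drop IH *.
have block : size w * (size q).+1 <= 2 * \sum_(p.+1 <= t < p.+1 + (size q).+1) rank t.
  by apply: (@block_rank_sum p x q y (tl ++ rest)); rewrite // def_drop /= -catA.
rewrite /= size_cat /= -addSn in IH *; rewrite -addSnnS.
rewrite addnA (big_cat_nat _ (n := p.+1 + (size q).+1)) ?leq_addr //.
by rewrite !mulnDr leq_add.
Qed.

Lemma half_below_at_split b1 qs1 b2 qs2 :
  lyndon w -> w = interleave b1 qs1 ++ interleave b2 qs2 ->
  sorted <%O b1 -> sorted <%O b2 ->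
  all (fun q => q == rev q) qs1 -> all (fun q => q == rev q) qs2 ->
  size qs1 = (size b1).-1 -> size qs2 = (size b2).-1 ->
  b1 != [::] -> b2 != [::] -> (last x0 b1 < head x0 b2)%O ->
  2 * below (head x0 b2) = size w.
Proof.
move=> w_lyndon def_w b1_sorted b2_sorted qs1_pal qs2_pal size_qs1 size_qs2 b1_nz b2_nz lt_b12.
set u := interleave b1 qs1 in def_w; set v := interleave b2 qs2 in def_w.
have u_gt0 : 0 < size u by rewrite /u; case: (b1) b1_nz.
have v_gt0 : 0 < size v by rewrite /v; case: (b2) b2_nz.
have size_w : size w = size u + size v by rewrite def_w size_cat.
have prefix : size w * (size u).-1 <= 2 * \sum_(1 <= t < size u) rank t.
  have := @interleave_rank_sum b1 qs1 0 v; rewrite -/u add1n prednK //.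
  by apply=> //; rewrite drop0.
have suffix : size w * (size v).-1 <= 2 * \sum_((size u).+1 <= t < size w) rank t.
  have := @interleave_rank_sum b2 qs2 (size u) [::]; rewrite -/v addSnnS prednK // -size_w.
  by apply=> //; rewrite {1}def_w drop_size_cat // cats0.
have nth_w t : nth x0 w t = nth x0 (u ++ v) t by rewrite -def_w.
have last_u : nth x0 w (size u).-1 = last x0 b1.
  by rewrite nth_w nth_cat ltn_predL u_gt0 nth_last last_interleave.
have head_v : nth x0 w (size u) = head x0 b2.
  by rewrite nth_w nth_cat ltnn subnn /v; case: (b2) b2_nz.
have lt_u_w : size u < size w by rewrite size_w -{1}[size u]addn0 ltn_add2l.
have above_r : above (last x0 b1) <= rank (size u).
  by rewrite -last_u -{2}(prednK u_gt0) above_le_rank_succ // prednK.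
have below_r : below (head x0 b2) <= rank (size u) by rewrite -head_v below_le_rank.
have total := sum_rank (proj1 w_lyndon).
rewrite big_ltn ?(leq_ltn_trans _ lt_u_w) // rank_lyndon0 // add0n in total.
rewrite (big_cat_nat _ (n := size u)) ?(ltnW lt_u_w) //= [in X in _ + X]big_ltn // in total.
have split_w : size w * (size w).-1 = size w * (size u).-1 + size w + size w * (size v).-1.
  by rewrite -mulnSr -!mulnDr; congr (_ * _); lia.
have := size_le_above_below lt_b12; lia.
Qed.

Lemma half_below_at_empty_factor a pis s :
  lyndon w -> w = interleave a pis -> sorted <%O a -> all (fun q => q == rev q) pis ->
  size pis = (size a).-1 -> 0 < s -> s < size a -> nth [::] pis s.-1 = [::] ->
  2 * below (nth x0 a s) = size w.
Proof.
move=> w_lyndon def_w a_sorted pis_pal size_pis s_gt0 lt_s_a pi_s_nil.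
have def_pis : pis = take s.-1 pis ++ [::] :: drop s pis.
  by rewrite -{1}(cat_take_drop s.-1 pis) (drop_nth [::]) ?pi_s_nil ?prednK //; lia.
have [pal1 pal2] :
    all (fun q => q == rev q) (take s.-1 pis) /\ all (fun q => q == rev q) (drop s pis).
  by move: pis_pal; rewrite {1}def_pis all_cat /= => /andP.
have size_pis1 : size (take s.-1 pis) = (size (take s a)).-1 by rewrite !size_takel //; lia.
have size_pis2 : size (drop s pis) = (size (drop s a)).-1 by rewrite !size_drop; lia.
have take_nz : take s a != [::] by rewrite -size_eq0 size_takel ?(ltnW lt_s_a) // -lt0n.
have drop_nz : drop s a != [::] by rewrite -size_eq0 size_drop subn_eq0 -ltnNge.
have def_w2 : w = interleave (take s a) (take s.-1 pis) ++ interleave (drop s a) (drop s pis).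
  by rewrite def_w -{1}(cat_take_drop s a) {1}def_pis interleave_cat_nil.
have last_take : last x0 (take s a) = nth x0 a s.-1.
  by rewrite -nth_last size_takel ?(ltnW lt_s_a) // nth_take ?prednK // ltn_predL.
have head_drop : head x0 (drop s a) = nth x0 a s by rewrite -nth0 nth_drop addn0.
rewrite -head_drop (half_below_at_split w_lyndon def_w2) ?take_sorted ?drop_sorted //.
by rewrite last_take head_drop (lt_sorted_ltn_nth x0 a_sorted) ?inE ?ltn_predL
  ?(leq_ltn_trans (leq_pred s)).
Qed.

End Rank.

Theorem lemma4p7 (d : Order.disp_t) (T : orderType d)
  (w a : seq T) (pis : seq (seq T)) (s : nat) :
  lyndon w -> perfectly_clustering w ->
  palindromic_factorization w a pis ->
  (1 <= s <= (size a).-1)%N ->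
  nth [::] pis s.-1 = [::] ->
  (\sum_(x <- take s a) count_mem x w = \sum_(x <- drop s a) count_mem x w)%N.
Proof.
move=> w_lyndon w_pc [[a_sorted mem_a size_pis def_w] pis_pal] /andP[s_gt0 le_s_a] pi_s_nil.
have lt_s_a : s < size a by lia.
have x0 : T by move: lt_s_a; case: (a) => // x.
have half := half_below_at_empty_factor x0 w_pc w_lyndon def_w a_sorted pis_pal size_pis
  s_gt0 lt_s_a pi_s_nil.
have w_a : {subset w <= a} by move=> z; rewrite mem_a.
have sum_a : \sum_(z <- take s a) count_mem z w + \sum_(z <- drop s a) count_mem z w = size w.
  rewrite -big_cat cat_take_drop sum_count_mem_uniq ?lt_sorted_uniq // -count_predT.
  by apply: eq_in_count => z; rewrite /= mem_a.
move: sum_a; rewrite (sum_count_take_sorted x0 a_sorted w_a lt_s_a) -{1}half mul2n -addnn.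
by move/addnI.
Qed.
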